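(* Let a thermodynamic Stephani universe be given and consider any thermodynamic scheme with specific entropy $s=s(w)$ ($s'\neq0$), matter density $n=(1+bw)^3/(R^3N(w))$ ($N>0$) and temperature $$\Theta=\frac{(\rho+p)R^3[N'(w)(1+bw)-3N(w)b]}{s'(w)(1+bw)^4}.$$ If the fluid acceleration $\mathbf a$ satisfies $\mathbf a=-\perp d\ln\Theta$ (equivalently $\partial_w(\alpha\Theta)=0$), then $b$ is constant, i.e. the metric is a FLRW universe. Hence a thermodynamic Stephani universe can describe a fluid with non-vanishing thermal conductivity coefficient only in the FLRW case.
   Context: Thermodynamic Stephani universe: $ds^2=-\alpha^2dt^2+\Omega^2(dx^2+dy^2+dz^2)$ with $L=R(t)/(1+b(t)w)$, $\Omega=\frac{w}{2z}L$, $\alpha=R\,\partial_R\ln L=\frac{1+(b-Rb')w}{1+bw}$, $w=2z/(1+\frac\varepsilon4 r^2)$, $r^2=x^2+y^2+z^2$, $\varepsilon\in\{0,\pm1\}$; functions of $t$ are regarded as functions of $R$ (prime $=d/dR$). Fluid velocity $u=\alpha^{-1}\partial_t$, $\rho=\frac{3}{R^2}(\dot R^2+\varepsilon-4b^2)$, $p=-\rho-\frac R3\frac{\rho'(R)}{\alpha}$. $\mathbf a=\nabla_uu$ is the acceleration, $\perp$ is the orthogonal projection onto the space orthogonal to $u$. *)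

From Stdlib Require Import Reals.
From Coquelicot Require Import Coquelicot.
Open Scope R_scope.

(* All functions of t are regarded as functions of the scale factor R
   (written RR below); prime = d/dR = Derive.  Rd RR is \dot R as a function of R. *)

Definition alpha (b : R -> R) (RR w : R) : R :=
  (1 + (b RR - RR * Derive b RR) * w) / (1 + b RR * w).

Definition rho (eps : R) (Rd b : R -> R) (RR : R) : R :=
  3 / RR ^ 2 * (Rd RR ^ 2 + eps - 4 * b RR ^ 2).

Definition pressure (eps : R) (Rd b : R -> R) (RR w : R) : R :=
  - rho eps Rd b RR - RR / 3 * Derive (rho eps Rd b) RR / alpha b RR w.

Definition density (b N : R -> R) (RR w : R) : R :=
  (1 + b RR * w) ^ 3 / (RR ^ 3 * N w).

Definition Theta (eps : R) (Rd b N s : R -> R) (RR w : R) : R :=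
  (rho eps Rd b RR + pressure eps Rd b RR w) * RR ^ 3
  * (Derive N w * (1 + b RR * w) - 3 * N w * b RR)
  / (Derive s w * (1 + b RR * w) ^ 4).

(* Since rho + p = -(R/3) rho'(R) / alpha, the product alpha Theta equals
   -(R^4/3) rho'(R) (N/(1+bw)^3)' / s'.  Hence d_w (alpha Theta) = 0 says that, for
   each R, the entropy s is an affine function of N/(1+b(R)w)^3 with nonzero slope.
   If b were not constant it would take three distinct values b1, b2, b3; eliminating
   s and then N between the three affine relations yields linear relations among the
   functions (1+b_i w)^-3, which are linearly independent (Vandermonde, applied to
   the value and the first two derivatives at one point), so a slope must vanish. *)

From Stdlib Require Import Reals Lra.
From Coquelicot Require Import Coquelicot.
Open Scope R_scope.

Lemma constant_on_interval (f : R -> R) (a c : R) :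
  (forall x, a < x < c -> is_derive f x 0) ->
  forall x y, a < x < c -> a < y < c -> f x = f y.
Proof.
  intros Hd x y Hx Hy.
  destruct (Rtotal_order x y) as [Hxy | [-> | Hyx]].
  - apply eq_is_derive; [intros t Ht; apply Hd; lra | exact Hxy].
  - reflexivity.
  - symmetry; apply eq_is_derive; [intros t Ht; apply Hd; lra | exact Hyx].
Qed.

Lemma is_derive_vanishing (f : R -> R) (a c x l : R) :
  (forall w, a < w < c -> f w = 0) -> a < x < c -> is_derive f x l -> l = 0.
Proof.
  intros Hf Hx Hd.
  assert (Hd0 : is_derive f x 0).
  { apply is_derive_ext_loc with (f := fun _ => 0); [| auto_derive; auto].
    apply (locally_interval _ x a c); try apply Hx.
    intros t Ht1 Ht2; symmetry; apply Hf; split; assumption. }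
  rewrite <- (is_derive_unique f x l Hd); exact (is_derive_unique f x 0 Hd0).
Qed.

Lemma affine_of_derive_ratio (f g : R -> R) (a c k : R) :
  (forall w, a < w < c -> ex_derive f w /\ ex_derive g w /\ Derive f w = k * Derive g w) ->
  exists D, forall w, a < w < c -> f w = k * g w + D.
Proof.
  intros Hfg.
  set (m := (a + c) / 2).
  exists (f m - k * g m); intros w Hw.
  assert (Hconst : forall t, a < t < c -> is_derive (fun t => f t - k * g t) t 0).
  { intros t Ht; destruct (Hfg t Ht) as (Hf & Hg & Hk).
    auto_derive; [repeat split; assumption |].
    change (Derive (fun x => f x) t) with (Derive f t).
    change (Derive (fun x => g x) t) with (Derive g t).
    rewrite Hk; ring. }
  pose proof (constant_on_interval _ a c Hconst w m Hw ltac:(unfold m; lra)) as E.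
  simpl in E; lra.
Qed.

Lemma intermediate_midvalue (f : R -> R) (x y : R) :
  x < y -> (forall t, x <= t <= y -> continuity_pt f t) -> f x <> f y ->
  exists z, x <= z <= y /\ f z = (f x + f y) / 2.
Proof.
  intros Hxy Hf Hne.
  set (m := (f x + f y) / 2).
  assert (Hm : forall t, continuity_pt (fct_cte m) t)
    by (intros t; apply continuity_pt_const; now intros ? ?).
  destruct (Rlt_or_le (f x) (f y)) as [Hlt | Hle].
  - destruct (Ranalysis5.IVT_interv (fun t => f t - m) x y) as (z & Hz & E);
      [| exact Hxy | unfold m; lra | unfold m; lra |].
    + intros t Ht; apply (continuity_pt_minus f (fct_cte m)); [apply Hf, Ht | apply Hm].
    + exists z; split; [exact Hz | lra].
  - destruct (Ranalysis5.IVT_interv (fun t => m - f t) x y) as (z & Hz & E);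
      [| exact Hxy | unfold m; lra | unfold m; lra |].
    + intros t Ht; apply (continuity_pt_minus (fct_cte m) f); [apply Hm | apply Hf, Ht].
    + exists z; split; [exact Hz | lra].
Qed.

Lemma exists_third_value (f : R -> R) (a c x y : R) :
  (forall t, a < t < c -> continuity_pt f t) ->
  a < x < c -> a < y < c -> f x <> f y ->
  exists z, a < z < c /\ f z <> f x /\ f z <> f y.
Proof.
  intros Hf Hx Hy Hne.
  assert (Hmid : forall u v, a < u -> v < c -> u < v -> f u <> f v ->
            exists z, a < z < c /\ f z = (f u + f v) / 2).
  { intros u v Hau Hvc Huv Hne'.
    destruct (intermediate_midvalue f u v) as (z & Hz & Ez); try assumption.
    - intros t Ht; apply Hf; lra.
    - exists z; split; [lra | exact Ez]. }
  destruct (Rtotal_order x y) as [Hxy | [Exy | Hyx]].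
  - destruct (Hmid x y) as (z & Hz & Ez); try tauto.
    exists z; split; [assumption | rewrite Ez; split; intros E; apply Hne; lra].
  - subst; contradiction.
  - destruct (Hmid y x) as (z & Hz & Ez); try tauto; [intros E; apply Hne; auto |].
    exists z; split; [assumption | rewrite Ez; split; intros E; apply Hne; lra].
Qed.

Lemma vandermonde3_coord (x1 x2 x3 y1 y2 y3 : R) :
  x1 <> x2 -> x1 <> x3 ->
  y1 + y2 + y3 = 0 ->
  y1 * x1 + y2 * x2 + y3 * x3 = 0 ->
  y1 * x1 ^ 2 + y2 * x2 ^ 2 + y3 * x3 ^ 2 = 0 ->
  y1 = 0.
Proof.
  intros H12 H13 E0 E1 E2.
  assert (L : y1 * ((x1 - x2) * (x1 - x3)) = 0).
  { transitivity ((y1 * x1 ^ 2 + y2 * x2 ^ 2 + y3 * x3 ^ 2)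
                  - (x2 + x3) * (y1 * x1 + y2 * x2 + y3 * x3)
                  + x2 * x3 * (y1 + y2 + y3)); [ring | rewrite E0, E1, E2; ring]. }
  destruct (Rmult_integral _ _ L) as [|Hp]; [assumption|].
  destruct (Rmult_integral _ _ Hp); exfalso; lra.
Qed.

Lemma vandermonde3_kernel (x1 x2 x3 y1 y2 y3 : R) :
  x1 <> x2 -> x1 <> x3 -> x2 <> x3 ->
  y1 + y2 + y3 = 0 ->
  y1 * x1 + y2 * x2 + y3 * x3 = 0 ->
  y1 * x1 ^ 2 + y2 * x2 ^ 2 + y3 * x3 ^ 2 = 0 ->
  y1 = 0 /\ y2 = 0 /\ y3 = 0.
Proof.
  intros H12 H13 H23 E0 E1 E2.
  split; [|split].
  - exact (vandermonde3_coord x1 x2 x3 y1 y2 y3 H12 H13 E0 E1 E2).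
  - apply (vandermonde3_coord x2 x1 x3 y2 y1 y3); auto; lra.
  - apply (vandermonde3_coord x3 x1 x2 y3 y1 y2); auto; lra.
Qed.

Lemma inv_cube_independent (a c b1 b2 b3 a1 a2 a3 : R) :
  a < c -> b1 <> b2 -> b1 <> b3 -> b2 <> b3 ->
  (forall w, a < w < c -> 1 + b1 * w <> 0 /\ 1 + b2 * w <> 0 /\ 1 + b3 * w <> 0) ->
  (forall w, a < w < c ->
     a1 / (1 + b1 * w) ^ 3 + a2 / (1 + b2 * w) ^ 3 + a3 / (1 + b3 * w) ^ 3 = 0) ->
  a1 = 0 /\ a2 = 0 /\ a3 = 0.
Proof.
  intros Hac H12 H13 H23 Hd Hsum.
  set (f1 := fun w => a1 * b1 / (1 + b1 * w) ^ 4 + a2 * b2 / (1 + b2 * w) ^ 4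
                      + a3 * b3 / (1 + b3 * w) ^ 4).
  assert (Hf1 : forall w, a < w < c -> f1 w = 0).
  { intros w Hw; destruct (Hd w Hw) as (d1 & d2 & d3).
    apply Rmult_eq_reg_l with (-3); [|lra]; rewrite Rmult_0_r.
    apply (is_derive_vanishing _ a c w _ Hsum Hw).
    unfold f1; auto_derive.
    - repeat split; repeat apply Rmult_integral_contrapositive_currified; auto with real.
    - field; auto. }
  set (w0 := (a + c) / 2).
  assert (Hw0 : a < w0 < c) by (unfold w0; lra).
  assert (Hf2 : a1 * b1 ^ 2 / (1 + b1 * w0) ^ 5 + a2 * b2 ^ 2 / (1 + b2 * w0) ^ 5
                + a3 * b3 ^ 2 / (1 + b3 * w0) ^ 5 = 0).
  { destruct (Hd w0 Hw0) as (d1 & d2 & d3).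
    apply Rmult_eq_reg_l with (-4); [|lra]; rewrite Rmult_0_r.
    apply (is_derive_vanishing _ a c w0 _ Hf1 Hw0).
    unfold f1; auto_derive.
    - repeat split; repeat apply Rmult_integral_contrapositive_currified; auto with real.
    - field; auto. }
  pose proof (Hsum w0 Hw0) as Hf0; pose proof (Hf1 w0 Hw0) as Hf1w0; unfold f1 in Hf1w0.
  destruct (Hd w0 Hw0) as (d1 & d2 & d3).
  (* At w0, with x_i = b_i / d_i and y_i = a_i / d_i^3, the value of the sum and
     of its first two derivatives are the Vandermonde moments of (y_i) at (x_i). *)
  assert (Hx : forall bi bj, 1 + bi * w0 <> 0 -> 1 + bj * w0 <> 0 -> bi <> bj ->
                 bi / (1 + bi * w0) <> bj / (1 + bj * w0)).
  { intros bi bj di dj Hij E; apply Hij.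
    assert (D : bi - bj = (bi / (1 + bi * w0) - bj / (1 + bj * w0))
                          * ((1 + bi * w0) * (1 + bj * w0))) by (field; auto).
    rewrite E, Rminus_diag, Rmult_0_l in D; lra. }
  destruct (vandermonde3_kernel (b1 / (1 + b1 * w0)) (b2 / (1 + b2 * w0)) (b3 / (1 + b3 * w0))
              (a1 / (1 + b1 * w0) ^ 3) (a2 / (1 + b2 * w0) ^ 3) (a3 / (1 + b3 * w0) ^ 3))
    as (y1 & y2 & y3); auto.
  - rewrite <- Hf1w0; field; auto.
  - rewrite <- Hf2; field; auto.
  - assert (Hcube : forall ai di, di <> 0 -> ai / di ^ 3 = 0 -> ai = 0).
    { intros ai di Hdi E.
      replace ai with (ai / di ^ 3 * di ^ 3) by (field; auto).
      rewrite E; ring. }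
    split; [|split];
      [apply (Hcube _ (1 + b1 * w0)) | apply (Hcube _ (1 + b2 * w0)) | apply (Hcube _ (1 + b3 * w0))];
      assumption.
Qed.

Lemma inv_cube_profiles_incompatible (N s : R -> R) (a c b1 b2 b3 u1 u2 u3 k1 k2 k3 : R) :
  a < c -> b1 <> b2 -> b1 <> b3 -> b2 <> b3 -> u1 <> 0 -> u2 <> 0 ->
  (forall w, a < w < c ->
     N w <> 0 /\ 1 + b1 * w <> 0 /\ 1 + b2 * w <> 0 /\ 1 + b3 * w <> 0) ->
  (forall w, a < w < c ->
     s w = u1 * (N w / (1 + b1 * w) ^ 3) + k1 /\
     s w = u2 * (N w / (1 + b2 * w) ^ 3) + k2 /\
     s w = u3 * (N w / (1 + b3 * w) ^ 3) + k3) ->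
  False.
Proof.
  intros Hac H12 H13 H23 Hu1 Hu2 Hnz Hs.
  assert (Hd : forall w, a < w < c ->
            1 + b1 * w <> 0 /\ 1 + b2 * w <> 0 /\ 1 + b3 * w <> 0)
    by (intros w Hw; apply Hnz, Hw).
  set (e1 := k1 - k3); set (e2 := k2 - k3).
  assert (Hdiff : forall w, a < w < c ->
            N w * (u3 / (1 + b3 * w) ^ 3 - u1 / (1 + b1 * w) ^ 3) = e1 /\
            N w * (u3 / (1 + b3 * w) ^ 3 - u2 / (1 + b2 * w) ^ 3) = e2).
  { intros w Hw; destruct (Hnz w Hw) as (_ & d1 & d2 & d3);
      destruct (Hs w Hw) as (s1 & s2 & s3).
    unfold e1, e2; split.
    - transitivity (u3 * (N w / (1 + b3 * w) ^ 3) - u1 * (N w / (1 + b1 * w) ^ 3));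
        [field; auto | lra].
    - transitivity (u3 * (N w / (1 + b3 * w) ^ 3) - u2 * (N w / (1 + b2 * w) ^ 3));
        [field; auto | lra]. }
  (* e2 * (first relation) - e1 * (second relation) has zero right-hand side. *)
  destruct (inv_cube_independent a c b1 b2 b3 (- e2 * u1) (e1 * u2) ((e2 - e1) * u3)
              Hac H12 H13 H23 Hd) as (E1 & E2 & _).
  { intros w Hw; destruct (Hnz w Hw) as (HN & d1 & d2 & d3);
      destruct (Hdiff w Hw) as (D1 & D2).
    apply Rmult_eq_reg_l with (N w); [|assumption].
    transitivity (e2 * (N w * (u3 / (1 + b3 * w) ^ 3 - u1 / (1 + b1 * w) ^ 3))
                  - e1 * (N w * (u3 / (1 + b3 * w) ^ 3 - u2 / (1 + b2 * w) ^ 3))).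
    - field; auto.
    - rewrite D1, D2; ring. }
  assert (He2 : e2 = 0) by (destruct (Rmult_integral _ _ E1); [lra | contradiction]).
  assert (He1 : e1 = 0) by (destruct (Rmult_integral _ _ E2); [lra | contradiction]).
  destruct (inv_cube_independent a c b1 b2 b3 (- u1) 0 u3 Hac H12 H13 H23 Hd) as (E & _).
  { intros w Hw; destruct (Hnz w Hw) as (HN & d1 & d2 & d3);
      destruct (Hdiff w Hw) as (D1 & _).
    apply Rmult_eq_reg_l with (N w); [|assumption].
    transitivity (N w * (u3 / (1 + b3 * w) ^ 3 - u1 / (1 + b1 * w) ^ 3)).
    - field; auto.
    - rewrite D1, He1; ring. }
  lra.
Qed.

Lemma alpha_mul_Theta (eps : R) (Rd b N s : R -> R) (RR w : R) :
  ex_derive N w -> Derive s w <> 0 -> 1 + b RR * w <> 0 -> alpha b RR w <> 0 ->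
  alpha b RR w * Theta eps Rd b N s RR w
  = - RR ^ 4 / 3 * Derive (rho eps Rd b) RR
    * (Derive (fun w' => N w' / (1 + b RR * w') ^ 3) w / Derive s w).
Proof.
  intros HN Hs Hd Ha.
  assert (Hprofile : is_derive (fun w' => N w' / (1 + b RR * w') ^ 3) w
            ((Derive N w * (1 + b RR * w) - 3 * N w * b RR) / (1 + b RR * w) ^ 4)).
  { auto_derive.
    - split; [assumption|]. split; [|exact I].
      repeat apply Rmult_integral_contrapositive_currified; auto with real.
    - change (Derive (fun x => N x) w) with (Derive N w); field; auto. }
  rewrite (is_derive_unique (fun w' : R => N w' / (1 + b RR * w') ^ 3) w _ Hprofile).
  unfold Theta, pressure; field; auto.
Qed.

Section ThermalScheme.

Variables (eps : R) (Rd b N s : R -> R) (R1 R2 w1 w2 : R).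

Hypothesis Hw : w1 < w2.
Hypothesis HNs : forall w, w1 < w < w2 ->
  ex_derive N w /\ ex_derive s w /\ Derive s w <> 0 /\ 0 < N w.
Hypothesis HT : forall RR w, R1 < RR < R2 -> w1 < w < w2 ->
  1 + b RR * w <> 0 /\ alpha b RR w <> 0 /\ 0 < Theta eps Rd b N s RR w.
Hypothesis Hcond : forall RR w, R1 < RR < R2 -> w1 < w < w2 ->
  is_derive (fun w' => alpha b RR w' * Theta eps Rd b N s RR w') w 0.

Lemma entropy_affine_in_profile (RR : R) : R1 < RR < R2 ->
  exists u k, u <> 0 /\
    forall w, w1 < w < w2 -> s w = u * (N w / (1 + b RR * w) ^ 3) + k.
Proof.
  intros HR.
  set (g := fun w => N w / (1 + b RR * w) ^ 3).
  set (K := - RR ^ 4 / 3 * Derive (rho eps Rd b) RR).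
  set (w0 := (w1 + w2) / 2).
  assert (Hw0 : w1 < w0 < w2) by (unfold w0; lra).
  set (A := alpha b RR w0 * Theta eps Rd b N s RR w0).
  assert (HA : A <> 0).
  { destruct (HT RR w0 HR Hw0) as (_ & Ha & HTh).
    apply Rmult_integral_contrapositive_currified; [assumption | lra]. }
  assert (HKA : forall w, w1 < w < w2 -> K * (Derive g w / Derive s w) = A).
  { intros w Hwi; destruct (HNs w Hwi) as (HN & _ & Hs' & _);
      destruct (HT RR w HR Hwi) as (Hd & Ha & _).
    unfold K, g; rewrite <- alpha_mul_Theta by assumption.
    exact (constant_on_interval _ w1 w2 (fun w Hwi => Hcond RR w HR Hwi) w w0 Hwi Hw0). }
  assert (HK : K <> 0).
  { intros HK0; apply HA; rewrite <- (HKA w0 Hw0), HK0; ring. }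
  destruct (affine_of_derive_ratio s g w1 w2 (K / A)) as (k & Hk).
  { intros w Hwi; destruct (HNs w Hwi) as (HN & Hs & Hs' & _);
      destruct (HT RR w HR Hwi) as (Hd & _).
    assert (Hg : ex_derive g w).
    { unfold g; auto_derive; repeat split; [assumption |].
      repeat apply Rmult_integral_contrapositive_currified; auto with real. }
    assert (Hg' : Derive g w <> 0).
    { intros Hg0; apply HA; rewrite <- (HKA w Hwi), Hg0; unfold Rdiv; ring. }
    repeat split; try assumption.
    rewrite <- (HKA w Hwi); field; auto. }
  exists (K / A), k; split.
  - apply Rmult_integral_contrapositive_currified; [| apply Rinv_neq_0_compat]; assumption.
  - exact Hk.
Qed.

Lemma b_takes_at_most_two_values (r1 r2 r3 : R) :
  R1 < r1 < R2 -> R1 < r2 < R2 -> R1 < r3 < R2 ->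
  b r1 <> b r2 -> b r1 <> b r3 -> b r2 <> b r3 -> False.
Proof.
  intros H1 H2 H3 H12 H13 H23.
  destruct (entropy_affine_in_profile r1 H1) as (u1 & k1 & Hu1 & Hs1).
  destruct (entropy_affine_in_profile r2 H2) as (u2 & k2 & Hu2 & Hs2).
  destruct (entropy_affine_in_profile r3 H3) as (u3 & k3 & _ & Hs3).
  apply (inv_cube_profiles_incompatible N s w1 w2 (b r1) (b r2) (b r3) u1 u2 u3 k1 k2 k3);
    try assumption.
  - intros w Hwi; repeat split;
      [apply Rgt_not_eq, HNs, Hwi | apply (HT r1) | apply (HT r2) | apply (HT r3)]; assumption.
  - intros w Hwi; repeat split; [apply Hs1 | apply Hs2 | apply Hs3]; assumption.
Qed.

End ThermalScheme.

Theorem mainTheorem11 (eps : R) (Rd b N s : R -> R) (R1 R2 w1 w2 : R) :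
  (eps = 0 \/ eps = 1 \/ eps = -1) ->
  0 < R1 -> R1 < R2 -> w1 < w2 ->
  (forall RR, R1 < RR < R2 -> ex_derive b RR /\ ex_derive Rd RR) ->
  (forall w, w1 < w < w2 ->
     ex_derive N w /\ ex_derive s w /\ Derive s w <> 0 /\ 0 < N w) ->
  (forall RR w, R1 < RR < R2 -> w1 < w < w2 ->
     1 + b RR * w <> 0 /\ alpha b RR w <> 0 /\ 0 < Theta eps Rd b N s RR w) ->
  (* a = - perp d ln Theta, i.e. d/dw (alpha * Theta) = 0 *)
  (forall RR w, R1 < RR < R2 -> w1 < w < w2 ->
     is_derive (fun w' => alpha b RR w' * Theta eps Rd b N s RR w') w 0) ->
  forall RR RR', R1 < RR < R2 -> R1 < RR' < R2 -> b RR = b RR'.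
Proof.
  intros _ _ _ Hw Hb HNs HT Hcond RR RR' HR HR'.
  destruct (Req_dec (b RR) (b RR')) as [Heq | Hne]; [exact Heq | exfalso].
  destruct (exists_third_value b R1 R2 RR RR') as (z & Hz & Hz1 & Hz2); try assumption.
  { intros t Ht; apply continuity_pt_filterlim, (ex_derive_continuous b), Hb, Ht. }
  exact (b_takes_at_most_two_values eps Rd b N s R1 R2 w1 w2 Hw HNs HT Hcond
           RR RR' z HR HR' Hz Hne (not_eq_sym Hz1) (not_eq_sym Hz2)).
Qed.
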